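(* For every instance of preemptive $s$-GPSP there is an optimal solution in which, for each scheduled job $j$, both its start time (the first time $j$ is processed) and its completion time belong to the set $T:=\{r_{j'}+\sum_{i=1}^{\overline p}s_iq_i : j'\in J,\ s_1,\dots,s_{\overline p}\in\{0,\dots,s\}\}$.
   Context: $s$-bounded General Profit Scheduling Problem ($s$-GPSP): given a set $J$ of $n$ jobs, each with release date $r_j$, processing time $p_j$, and a non-increasing profit function $f_j$ of the completion time, select a set $\bar J\subseteq J$ of at most $s$ jobs and schedule them on a single machine, possibly with preemption (jobs may be interrupted and resumed; no job is processed before its release date), so as to maximize $\sum_{j\in\bar J}f_j(C_j)$, $C_j$ being the completion time. $q_1,\dots,q_{\overline p}$ are the distinct processing times in the instance. *)

From HB Require Import structures.
From mathcomp Require Import all_boot all_order all_algebra.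
Set Implicit Arguments. Unset Strict Implicit. Unset Printing Implicit Defensive.
Import Order.TTheory GRing.Theory Num.Theory.
Local Open Scope ring_scope.

(* A preemptive schedule is a finite list of processing pieces (j, a, b):
   job j is processed on the machine during the time interval [a, b). *)
Definition piece (R : realFieldType) (n : nat) := ('I_n * R * R)%type.

Definition pc_job {R : realFieldType} {n} (x : piece R n) : 'I_n := x.1.1.
Definition pc_start {R : realFieldType} {n} (x : piece R n) : R := x.1.2.
Definition pc_end {R : realFieldType} {n} (x : piece R n) : R := x.2.

Definition starts_of {R : realFieldType} {n} (sg : seq (piece R n)) (j : 'I_n) : seq R :=
  [seq pc_start x | x <- sg & pc_job x == j].
Definition ends_of {R : realFieldType} {n} (sg : seq (piece R n)) (j : 'I_n) : seq R :=
  [seq pc_end x | x <- sg & pc_job x == j].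

Definition start_time {R : realFieldType} {n} (sg : seq (piece R n)) (j : 'I_n) : R :=
  let l := starts_of sg j in \big[Num.min/head 0 l]_(a <- l) a.
Definition compl_time {R : realFieldType} {n} (sg : seq (piece R n)) (j : 'I_n) : R :=
  let l := ends_of sg j in \big[Num.max/head 0 l]_(b <- l) b.

Definition feasible {R : realFieldType} {n} (r p : 'I_n -> R) (s : nat)
    (Jb : {set 'I_n}) (sg : seq (piece R n)) : Prop :=
  [/\ (#|Jb| <= s)%N,
      (forall x, x \in sg -> [/\ pc_job x \in Jb, r (pc_job x) <= pc_start x
                                & pc_start x < pc_end x]),
      pairwise (fun x y => (pc_end x <= pc_start y) || (pc_end y <= pc_start x)) sg
    & (forall j, j \in Jb ->
         \sum_(x <- sg | pc_job x == j) (pc_end x - pc_start x) = p j)].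

Definition value {R : realFieldType} {n} (f : 'I_n -> R -> R)
    (Jb : {set 'I_n}) (sg : seq (piece R n)) : R :=
  \sum_(j in Jb) f j (compl_time sg j).

Definition proc_values {R : realFieldType} {n} (p : 'I_n -> R) : seq R :=
  undup [seq p j | j <- enum 'I_n].

Definition inT {R : realFieldType} {n} (r p : 'I_n -> R) (s : nat) (t : R) : Prop :=
  exists (j' : 'I_n) (k : R -> nat),
    (forall q, q \in proc_values p -> (k q <= s)%N) /\
    t = r j' + \sum_(q <- proc_values p) (k q)%:R * q.

From HB Require Import structures.
From mathcomp Require Import all_boot all_order all_algebra.
From mathcomp Require Import lra.
From Stdlib Require Import Classical.
Import Order.TTheory GRing.Theory Num.Theory.
Local Open Scope ring_scope.
Set Implicit Arguments. Unset Strict Implicit.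

(* The proof is a dominance argument.  Fix any feasible schedule sg of a job
   set Jb and list the jobs of Jb by nondecreasing completion time in sg.  The
   preemptive list schedule for this priority list (at every instant process
   the released unfinished job of highest priority) completes every job no
   later than sg does.  Moreover, in a list schedule every start and every
   completion time has the form r_j0 + sum_{i in A} p_i with A a subset of Jb
   ("block times"): it ends a busy period of higher-priority jobs that starts
   at a release date, and a busy period has exactly the total length of the
   jobs processed in it.  Block times lie in T, and they form a finite set;
   hence among the schedules whose start and completion times are block times
   one of maximal value exists, and by dominance (profits are non-increasing)
   it is optimal among all feasible schedules. *)

Lemma seq_argmin (T : eqType) (R : realFieldType) (g : T -> R) (P : T -> Prop)
    (l : seq T) :
  (exists2 y, y \in l & P y) ->
  exists y, [/\ y \in l, P y & forall z, z \in l -> P z -> g y <= g z].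
Proof.
elim: l => [[]//|a l IH] [y yl Py].
have [[m [ml Pm minm]]|noP] :
    (exists m, [/\ m \in l, P m & forall z, z \in l -> P z -> g m <= g z])
    \/ (forall z, z \in l -> ~ P z).
  case: (classic (exists2 y, y \in l & P y)) => [/IH|noP]; first by left.
  by right => z zl Pz; apply: noP; exists z.
- case: (classic (P a /\ g a < g m)) => [[Pa lt_am]|not_a].
    exists a; split => //; first exact: mem_head.
    move=> z; rewrite inE => /predU1P[-> //|zl Pz].
    exact: le_trans (ltW lt_am) (minm z zl Pz).
  exists m; split => //; first by rewrite inE ml orbT.
  move=> z; rewrite inE => /predU1P[->|zl Pz]; last exact: minm.
  by move=> Pa; rewrite leNgt; apply/negP => lt_am; apply: not_a.
- have Pa : P a by move: yl Py; rewrite inE => /predU1P[-> //|/noP].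
  exists a; split => //; first exact: mem_head.
  by move=> z; rewrite inE => /predU1P[-> //|/noP].
Qed.

Lemma finite_values_max (T : Type) (R : realFieldType) (P : T -> Prop) (val : T -> R)
    (l : seq R) :
  (exists x, P x) -> (forall x, P x -> val x \in l) ->
  exists x, P x /\ forall y, P y -> val y <= val x.
Proof.
move=> [x0 Px0] in_l.
have [v [_ [x [Px <-]] vmax]] := seq_argmin (fun v => - v)
  (P := fun v => exists x, P x /\ val x = v)
  (ex_intro2 _ _ (val x0) (in_l x0 Px0) (ex_intro _ x0 (conj Px0 erefl))).
exists x; split => // y Py; rewrite -lerN2; apply: vmax (in_l y Py) _.
by exists y.
Qed.

Lemma count_lt_sub (T : eqType) (a b : pred T) (l : seq T) y :
  {in l, forall x, a x -> b x} -> y \in l -> b y -> ~~ a y ->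
  (count a l < count b l)%N.
Proof.
move=> ab yl by_ nay.
have -> : count a l = count a (filter b l).
  rewrite count_filter; apply: eq_in_count => x xl /=.
  by case ax: (a x); rewrite // (ab x xl ax).
rewrite -(size_filter b l) -(count_predC a (filter b l)) -[X in (X < _)%N]addn0.
by rewrite ltn_add2l -has_count; apply/hasP; exists y; rewrite ?mem_filter ?by_.
Qed.

Lemma big_idem_head_mem (R : realFieldType) (op : R -> R -> R) (l : seq R) :
  (forall a b, op a b = a \/ op a b = b) -> l != [::] ->
  \big[op/head 0 l]_(b <- l) b \in l.
Proof.
move=> op_sel nl; rewrite big_seq; elim/big_ind: _ => //.
  by case: l nl => // a l' _; rewrite mem_head.
by move=> a b al bl; case: (op_sel a b) => ->.
Qed.

Section Pieces.
Variables (R : realFieldType) (n : nat).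
Implicit Types (x y : piece R n) (S : seq (piece R n)).

Definition disj x y : bool :=
  (pc_end x <= pc_start y) || (pc_end y <= pc_start x).
Definition covers (u : R) x : bool := (pc_start x <= u) && (u < pc_end x).
Definition len x : R := pc_end x - pc_start x.

Definition covered S (lo hi : R) : Prop :=
  forall u, lo <= u -> u < hi -> has (covers u) S.

Definition within (lo hi : R) S : Prop :=
  forall x, x \in S -> [/\ lo <= pc_start x, pc_start x < pc_end x & pc_end x <= hi].

Lemma disj_covers x y u : disj x y -> covers u x -> covers u y -> False.
Proof.
rewrite /disj /covers => /orP[] H /andP[x1 x2] /andP[y1 y2]; lra.
Qed.

Lemma covers_unique S x y u :
  pairwise disj S -> x \in S -> y \in S -> covers u x -> covers u y -> x = y.
Proof.
elim: S => // a S IH; rewrite pairwise_cons => /andP[/allP da dS].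
rewrite !inE => /predU1P[->|xS] /predU1P[->|yS] cx cy //.
- by case: (disj_covers (da y yS) cx cy).
- by case: (disj_covers (da x xS) cy cx).
- exact: IH.
Qed.

Lemma sum_len_around x0 S :
  \sum_(y <- x0 :: S) len y =
  \sum_(y <- [seq y <- S | pc_end y <= pc_start x0]) len y + len x0 +
  \sum_(y <- [seq y <- S | ~~ (pc_end y <= pc_start x0)]) len y.
Proof.
by rewrite big_cons (bigID (fun y => pc_end y <= pc_start x0)) !big_filter addrCA addrA.
Qed.

Lemma within_around lo hi x0 S :
  pairwise disj (x0 :: S) -> within lo hi (x0 :: S) ->
  within lo (pc_start x0) [seq y <- S | pc_end y <= pc_start x0] /\
  within (pc_end x0) hi [seq y <- S | ~~ (pc_end y <= pc_start x0)].
Proof.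
rewrite pairwise_cons => /andP[/allP dx0 _] Hw.
split=> y; rewrite mem_filter => /andP[Hy yS];
  have [y1 y2 y3] := Hw y (mem_behead (s := x0 :: S) yS); split => //.
by move: (dx0 y yS); rewrite /disj (negbTE Hy) orbF.
Qed.

Lemma covered_around lo hi x0 S :
  pairwise disj (x0 :: S) -> within lo hi (x0 :: S) -> covered (x0 :: S) lo hi ->
  covered [seq y <- S | pc_end y <= pc_start x0] lo (pc_start x0) /\
  covered [seq y <- S | ~~ (pc_end y <= pc_start x0)] (pc_end x0) hi.
Proof.
rewrite pairwise_cons => /andP[/allP dx0 _] Hw Hc.
have [x1 x2 x3] := Hw x0 (mem_head _ _).
split=> u u1 u2.
- have /hasP[y] := Hc u u1 (ltac:(lra)).
  rewrite inE => /predU1P[->|yS]; first by rewrite /covers; lra.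
  move=> cy; apply/hasP; exists y => //; rewrite mem_filter yS andbT.
  by move: (dx0 y yS) cy; rewrite /disj /covers => /orP[] // ? /andP[]; lra.
- have /hasP[y] := Hc u (ltac:(lra)) u2.
  rewrite inE => /predU1P[->|yS]; first by rewrite /covers; lra.
  move=> cy; apply/hasP; exists y => //; rewrite mem_filter yS andbT.
  by move: cy; rewrite /covers -ltNge => /andP[]; lra.
Qed.

Lemma sum_len_within S lo hi :
  lo <= hi -> pairwise disj S -> within lo hi S -> \sum_(x <- S) len x <= hi - lo.
Proof.
have [k] := ubnP (size S); elim: k S lo hi => // k IH [|x0 S] lo hi Hk le_lohi.
  by rewrite big_nil subr_ge0.
move=> /[dup] Hd; rewrite pairwise_cons => /andP[_ dS] Hw.
have [x1 x2 x3] := Hw x0 (mem_head _ _).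
have [wL wR] := within_around Hd Hw.
have small (P : pred (piece R n)) : (size (filter P S) < k)%N.
  by rewrite size_filter (leq_ltn_trans (count_size _ _)).
rewrite sum_len_around.
have := IH _ _ _ (small _) x1 (pairwise_filter _ dS) wL.
have := IH _ _ _ (small _) x3 (pairwise_filter _ dS) wR.
rewrite /len; lra.
Qed.

Lemma sum_len_covered S lo hi :
  lo <= hi -> pairwise disj S -> within lo hi S -> covered S lo hi ->
  \sum_(x <- S) len x = hi - lo.
Proof.
have [k] := ubnP (size S); elim: k S lo hi => // k IH [|x0 S] lo hi Hk le_lohi.
  move=> _ _ Hc; rewrite big_nil; case: (ltrP lo hi) => [lt_lohi|]; last lra.
  by have := Hc lo (lexx _) lt_lohi.
move=> /[dup] Hd; rewrite pairwise_cons => /andP[_ dS] Hw Hc.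
have [x1 x2 x3] := Hw x0 (mem_head _ _).
have [wL wR] := within_around Hd Hw.
have [cL cR] := covered_around Hd Hw Hc.
have small (P : pred (piece R n)) : (size (filter P S) < k)%N.
  by rewrite size_filter (leq_ltn_trans (count_size _ _)).
rewrite sum_len_around.
rewrite (IH _ _ _ (small _) x1 (pairwise_filter _ dS) wL cL).
rewrite (IH _ _ _ (small _) x3 (pairwise_filter _ dS) wR cR) /len; lra.
Qed.

End Pieces.

Arguments disj {R n} x y.

Section Insertion.
Variables (R : realFieldType) (n : nat) (k : 'I_n) (B : seq (piece R n)).
Hypothesis disjB : pairwise disj B.

(* P consists of pieces of job k, starting at or after t, of total length
   rem and disjoint from B, and P ++ B keeps the machine busy from t until
   the last piece of P ends: job k is processed in the earliest idle time of B
   after t. *)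
Definition fills (t rem : R) (P : seq (piece R n)) : Prop :=
  [/\ forall x, x \in P -> [/\ pc_job x = k, t <= pc_start x & pc_start x < pc_end x],
      pairwise disj (P ++ B),
      \sum_(x <- P) len x = rem
    & forall u, t <= u -> has (fun x => u < pc_end x) P -> has (covers u) (P ++ B)].

Lemma fills_nil t : fills t 0 [::].
Proof. by split => //; rewrite big_nil. Qed.

Lemma fills_shift t t' rem P :
  t <= t' -> covered B t t' -> fills t' rem P -> fills t rem P.
Proof.
move=> le_tt' cB [pieceP disjP sumP fillP]; split => //.
  by move=> x /pieceP[? ? ?]; split => //; lra.
move=> u tu Hu; case: (ltrP u t') => [ut'|t'u]; last exact: fillP.
by rewrite has_cat cB ?orbT.
Qed.

Lemma fills_cons t g t' rem P :
  t < g -> g <= t' -> (forall y, y \in B -> (pc_end y <= t) || (g <= pc_start y)) ->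
  covered B g t' -> fills t' rem P ->
  fills t (rem + (g - t)) (((k, t), g) :: P).
Proof.
move=> lt_tg le_gt' gapB cB [pieceP disjP sumP fillP]; split.
- move=> x; rewrite inE => /predU1P[->|/pieceP[? ? ?]]; split => //; lra.
- rewrite cat_cons pairwise_cons disjP andbT; apply/allP => z.
  rewrite mem_cat /disj => /orP[/pieceP[_ ? _]|/gapB]; last by rewrite orbC.
  by apply/orP; left; rewrite /pc_end /=; lra.
- by rewrite big_cons sumP /len /pc_end /pc_start /=; lra.
- move=> u tu Hu; rewrite cat_cons /=.
  case: (ltrP u g) => [ug|gu]; first by rewrite /covers /= tu ug.
  case: (ltrP u t') => [ut'|t'u]; first by rewrite has_cat cB ?orbT.
  by rewrite fillP ?orbT //; move: Hu => /= /orP[|//]; rewrite /pc_end /=; lra.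
Qed.

Lemma fills_single t rem :
  0 < rem -> (forall y, y \in B -> (pc_end y <= t) || (t + rem <= pc_start y)) ->
  fills t rem [:: ((k, t), t + rem)].
Proof.
move=> rem_gt0 gapB; rewrite {1}(_ : rem = 0 + (t + rem - t)); last by lra.
apply: fills_cons (fills_nil _) => //; first lra.
by move=> u u1 u2; lra.
Qed.

Hypothesis posB : forall y, y \in B -> pc_start y < pc_end y.

(* Termination measure of the insertion: pieces of B ending after t. *)
Lemma count_ends_after_lt t y :
  y \in B -> t < pc_end y ->
  (count (fun z => pc_end y < pc_end z)%R B < count (fun z => t < pc_end z)%R B)%N.
Proof.
move=> yB ty; apply: (count_lt_sub (y := y)) => //=; last by rewrite ltxx.
by move=> z _ /= /(lt_trans ty).
Qed.

Lemma fills_exists t rem : 0 < rem -> exists P, fills t rem P.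
Proof.
have [m] := ubnP (count (fun y => t < pc_end y) B).
elim: m t rem => // m IH t rem Hm rem_gt0.
case: (boolP (has (covers t) B)) => [/hasP[y yB /andP[y1 y2]] | idle].
  have [P HP] := IH (pc_end y) rem (leq_trans (count_ends_after_lt yB y2) Hm) rem_gt0.
  exists P; apply: fills_shift HP; first exact: ltW.
  by move=> u u1 u2; apply/hasP; exists y; rewrite // /covers u2 (le_trans y1).
have idleB y : y \in B -> (pc_end y <= t) || (t < pc_start y).
  move=> yB; have : ~~ covers t y by apply: contra idle => cy; apply/hasP; exists y.
  by rewrite /covers negb_and -!ltNge -leNgt orbC.
case: (boolP (has (fun y => t < pc_start y) B)) => [/hasP[y1 y1B t_y1]|none]; last first.
  exists [:: ((k, t), t + rem)]; apply: fills_single => // y yB.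
  case/orP: (idleB y yB) => [->//|t_y]; case/negP: none; apply/hasP; by exists y.
have [y0 [y0B t_y0 y0_first]] :=
  seq_argmin pc_start (P := fun y => t < pc_start y) (ex_intro2 _ _ y1 y1B t_y1).
have gapB y : y \in B -> (pc_end y <= t) || (pc_start y0 <= pc_start y).
  by move=> yB; case/orP: (idleB y yB) => [->//|/(y0_first y yB) ->]; rewrite orbT.
case: (lerP (t + rem) (pc_start y0)) => [fit|no_fit].
  exists [:: ((k, t), t + rem)]; apply: fills_single => // y yB.
  by case/orP: (gapB y yB) => [->//|le_y0y]; rewrite (le_trans fit le_y0y) orbT.
have y0_pos := posB y0B.
have [P HP] := IH (pc_end y0) (rem - (pc_start y0 - t))
  (leq_trans (count_ends_after_lt y0B (lt_trans t_y0 y0_pos)) Hm) (ltac:(lra)).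
exists (((k, t), pc_start y0) :: P); rewrite -[X in fills _ X](subrK (pc_start y0 - t)).
apply: fills_cons HP => //; first exact: ltW.
by move=> u u1 u2; apply/hasP; exists y0; rewrite // /covers u1 u2.
Qed.

End Insertion.

Section ListScheduling.
Variables (R : realFieldType) (n : nat) (r p : 'I_n -> R).
Implicit Types (x y : piece R n) (S : seq (piece R n)) (L : seq 'I_n).

Definition list_schedule L S : Prop :=
  [/\ forall x, x \in S ->
        [/\ pc_job x \in L, r (pc_job x) <= pc_start x & pc_start x < pc_end x],
      pairwise disj S,
      forall j, j \in L -> \sum_(x <- S | pc_job x == j) len x = p j
    & forall x, x \in S -> forall u, r (pc_job x) <= u -> u < pc_end x ->
        has (fun y => (index (pc_job y) L <= index (pc_job x) L)%N && covers u y) S].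

(* Appending the lowest-priority job k amounts to inserting it into the idle
   time after r k. *)
Lemma list_schedule_rcons L S k P :
  list_schedule L S -> k \notin L -> fills k S (r k) (p k) P ->
  list_schedule (rcons L k) (P ++ S).
Proof.
move=> [pieceS disjS sumS prioS] kL [pieceP disjP sumP fillP].
have index_old j : j \in L -> index j (rcons L k) = index j L.
  by move=> jL; rewrite -cats1 index_cat jL.
have jobS x : x \in S -> pc_job x != k.
  by move=> /pieceS[jL _ _]; apply: contraNneq kL => <-.
have jobPS y : y \in P ++ S -> pc_job y \in rcons L k.
  rewrite mem_cat mem_rcons inE => /orP[/pieceP[-> _ _]|/pieceS[-> _ _]].
    by rewrite eqxx.
  by rewrite orbT.
split => //.
- move=> x xPS; rewrite jobPS //.
  by move: xPS; rewrite mem_cat => /orP[/pieceP[-> ? ?]|/pieceS[? ? ?]].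
- move=> j; rewrite mem_rcons inE => /orP[/eqP->|jL]; rewrite big_cat /=.
    rewrite [X in _ + X]big1_seq ?addr0; last first.
      by move=> x /andP[jx /jobS]; rewrite jx.
    rewrite -sumP big_seq_cond [RHS]big_seq_cond; apply: eq_bigl => x.
    by case xP: (x \in P) => //=; have [-> _ _] := pieceP x xP; rewrite eqxx.
  rewrite big1_seq ?add0r; first exact: sumS.
  move=> x /andP[/eqP jx /pieceP[jxk _ _]]; by move: kL; rewrite -jxk jx jL.
- move=> x; rewrite mem_cat => /orP[xP | xS] u u1 u2.
    have [jx _ _] := pieceP x xP; rewrite jx in u1 *.
    have /hasP[y yPS cy] := fillP u u1 (introT hasP (ex_intro2 _ _ x xP u2)).
    apply/hasP; exists y; rewrite // cy andbT.
    have -> : index k (rcons L k) = size L.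
      by rewrite -cats1 index_cat (negbTE kL) /= eqxx addn0.
    by rewrite -ltnS -(size_rcons L k) index_mem jobPS.
  have /hasP[y yS /andP[Hi cy]] := prioS x xS u u1 u2.
  apply/hasP; exists y; first by rewrite mem_cat yS orbT.
  have [jx _ _] := pieceS x xS; have [jy _ _] := pieceS y yS.
  by rewrite !index_old // Hi cy.
Qed.

Lemma list_schedule_exists L :
  (forall j, 0 < p j) -> uniq L -> exists S, list_schedule L S.
Proof.
move=> p_gt0; elim/last_ind: L => [_|L k IH].
  by exists [::]; split => // j.
rewrite rcons_uniq => /andP[kL /IH[S HS]].
have [pieceS disjS _ _] := HS.
have posS y : y \in S -> pc_start y < pc_end y by case/pieceS.
have [P HP] := fills_exists k disjS posS (r k) (p_gt0 k).
by exists (P ++ S); apply: list_schedule_rcons.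
Qed.

End ListScheduling.

Section BusyPeriods.
Variables (R : realFieldType) (n : nat) (r : 'I_n -> R).
Implicit Types (x y : piece R n) (S : seq (piece R n)).

Definition greedy S : Prop :=
  forall x, x \in S -> covered S (r (pc_job x)) (pc_end x).

Definition job_cut S (v : R) : Prop :=
  forall x y, x \in S -> y \in S -> pc_job x = pc_job y ->
    pc_start x < v -> v < pc_end y -> False.

Lemma busy_period_start S v y0 :
  (forall x, x \in S -> r (pc_job x) <= pc_start x /\ pc_start x < pc_end x) ->
  greedy S -> y0 \in S -> pc_start y0 < v -> covered S (pc_start y0) v ->
  exists rho, [/\ rho <= pc_start y0, (exists2 x0, x0 \in S & rho = r (pc_job x0)),
    covered S rho v, job_cut S rho
  & forall x, x \in S -> rho < pc_end x -> rho <= r (pc_job x)].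
Proof.
move=> HS Hg y0S y0v y0c.
(* rho: the earliest start of a piece after which the machine is busy until v *)
pose Q y := pc_start y < v /\ covered S (pc_start y) v.
have [x0 [x0S [x0v x0c] x0_first]] :=
  seq_argmin pc_start (P := Q) (ex_intro2 _ _ y0 y0S (conj y0v y0c)).
set rho := pc_start x0 in x0v x0c *.
(* by minimality of rho, no piece is processed across rho *)
have no_straddle y : y \in S -> pc_start y < rho -> pc_end y < rho.
  move=> yS lt_y_rho; rewrite ltNge; apply/negP => le_rho_y.
  have Qy : Q y.
    split=> [|u u1 u2]; first exact: lt_trans lt_y_rho x0v.
    case: (ltrP u (pc_end y)) => Hu; last by apply: x0c; rewrite ?(le_trans le_rho_y).
    by apply/hasP; exists y; rewrite // /covers u1.
  by have := x0_first y yS Qy; rewrite leNgt lt_y_rho.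
(* a job released before rho completes before rho: otherwise greediness
   keeps the machine busy just below rho, beyond the last end m < rho *)
have released_before x : x \in S -> r (pc_job x) < rho -> pc_end x < rho.
  move=> xS rx_rho; rewrite ltNge; apply/negP => le_rho_x.
  pose m := \big[Num.max/r (pc_job x)]_(y <- S | pc_end y < rho) pc_end y.
  have rx_m : r (pc_job x) <= m by exact: bigmax_ge_id.
  have m_rho : m < rho.
    by rewrite /m; elim/big_ind: _ => // a b; rewrite gt_max => -> ->.
  have /hasP[y yS /andP[y1 y2]] := Hg x xS ((m + rho) / 2) (ltac:(lra)) (ltac:(lra)).
  have y_rho := no_straddle y yS (ltac:(lra)).
  have : pc_end y <= m by apply: (le_bigmax_seq _ y).
  lra.
have [r0 r1] := HS x0 x0S.
have rho_rel : rho = r (pc_job x0).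
  apply/eqP; rewrite eq_le r0 andbT leNgt; apply/negP => /(released_before x0 x0S).
  rewrite /rho; lra.
exists rho; split => //.
- exact: x0_first y0 y0S (conj y0v y0c).
- by exists x0.
- move=> x y xS yS Ej Hx Hy; have [x1 x2] := HS x xS.
  by have := released_before y yS (ltac:(rewrite -Ej; lra)); lra.
- by move=> x xS Hx; rewrite leNgt; apply/negP => /(released_before x xS); lra.
Qed.

Lemma sum_by_job S (A : {set 'I_n}) (w : piece R n -> R) :
  \sum_(j in A) \sum_(x <- S | pc_job x == j) w x = \sum_(x <- S | pc_job x \in A) w x.
Proof.
rewrite (partition_big pc_job (mem A)) //=; apply: eq_bigr => j jA.
by apply: eq_bigl => x; case: eqP => [->|]; rewrite ?jA ?andbF.
Qed.

Definition block_jobs S (rho v : R) : {set 'I_n} :=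
  [set j | has (fun x => [&& pc_job x == j, pc_start x < v & rho < pc_end x]) S].

Lemma busy_block_length (p : 'I_n -> R) S rho v :
  pairwise disj S -> (forall x, x \in S -> pc_start x < pc_end x) -> rho <= v ->
  job_cut S rho -> job_cut S v -> covered S rho v ->
  (forall x, x \in S -> \sum_(y <- S | pc_job y == pc_job x) len y = p (pc_job x)) ->
  v - rho = \sum_(j in block_jobs S rho v) p j.
Proof.
move=> Hd Hlt le_rho_v cut_rho cut_v Hc Hsum.
set A := block_jobs S rho v.
have inside x : x \in S -> pc_job x \in A -> rho <= pc_start x /\ pc_end x <= v.
  move=> xS; rewrite inE => /hasP[y yS /and3P[/eqP Ej y1 y2]]; split.
    by rewrite leNgt; apply/negP => x1; apply: cut_rho x y xS yS (esym Ej) x1 y2.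
  by rewrite leNgt; apply/negP => x2; apply: cut_v y x yS xS Ej y1 x2.
have meets x : x \in S -> (pc_job x \in A) = (pc_start x < v) && (rho < pc_end x).
  move=> xS; apply/idP/andP => [/(inside x xS) [x1 x2]|[x1 x2]].
    by have := Hlt x xS; split; lra.
  by rewrite inE; apply/hasP; exists x; rewrite ?eqxx ?x1.
have -> : \sum_(j in A) p j = \sum_(x <- S | pc_job x \in A) len x.
  rewrite -sum_by_job; apply: eq_bigr => j.
  by rewrite inE => /hasP[y yS /and3P[/eqP <- _ _]]; rewrite Hsum.
rewrite -big_filter; symmetry; apply: sum_len_covered => //.
- exact: pairwise_filter.
- move=> x; rewrite mem_filter => /andP[xA xS].
  by have [x1 x2] := inside x xS xA; split; rewrite ?Hlt.
- move=> u u1 u2; have /hasP[y yS /andP[c1 c2]] := Hc u u1 u2.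
  apply/hasP; exists y; rewrite ?mem_filter ?yS ?andbT /covers ?c1 ?c2 // meets //.
  by apply/andP; split; lra.
Qed.

End BusyPeriods.

Section Times.
Variables (R : realFieldType) (n : nat).
Implicit Types (x y : piece R n) (S : seq (piece R n)).

Lemma job_has_piece S k (pk : R) :
  \sum_(x <- S | pc_job x == k) len x = pk -> 0 < pk -> exists2 x, x \in S & pc_job x = k.
Proof.
move=> Hsum pk_gt0.
case: (boolP (has (fun x => pc_job x == k) S)) => [/hasP[x xS /eqP]|]; first by exists x.
move/hasPn => none; move: pk_gt0; rewrite -Hsum big1_seq ?ltxx //.
by move=> x /andP[jx /none]; rewrite jx.
Qed.

Lemma compl_timeP S k : (exists2 x, x \in S & pc_job x = k) ->
  (exists2 x, x \in S & pc_job x = k /\ pc_end x = compl_time S k) /\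
  (forall x, x \in S -> pc_job x = k -> pc_end x <= compl_time S k).
Proof.
case=> x1 x1S jx1; rewrite /compl_time /ends_of.
set l := [seq pc_end x | x <- S & pc_job x == k].
have in_l y : y \in S -> pc_job y = k -> pc_end y \in l.
  by move=> yS jy; apply: map_f; rewrite mem_filter jy eqxx.
split=> [|x xS jx]; last exact: (le_bigmax_seq _ _ xpredT id (in_l x xS jx)).
have /mapP[x] : \big[Num.max/head 0 l]_(b <- l) b \in l.
  apply: big_idem_head_mem => [a b|]; first by rewrite maxEle; case: ifP; [right|left].
  by apply/eqP => l0; have := in_l x1 x1S jx1; rewrite l0.
by rewrite mem_filter => /andP[/eqP jx xS] ->; exists x.
Qed.

Lemma start_timeP S k : (exists2 x, x \in S & pc_job x = k) ->
  (exists2 x, x \in S & pc_job x = k /\ pc_start x = start_time S k) /\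
  (forall x, x \in S -> pc_job x = k -> start_time S k <= pc_start x).
Proof.
case=> x1 x1S jx1; rewrite /start_time /starts_of.
set l := [seq pc_start x | x <- S & pc_job x == k].
have in_l y : y \in S -> pc_job y = k -> pc_start y \in l.
  by move=> yS jy; apply: map_f; rewrite mem_filter jy eqxx.
split=> [|x xS jx]; last exact: (ge_bigmin_seq _ _ xpredT id (in_l x xS jx)).
have /mapP[x] : \big[Num.min/head 0 l]_(b <- l) b \in l.
  apply: big_idem_head_mem => [a b|]; first by rewrite minEle; case: ifP; [left|right].
  by apply/eqP => l0; have := in_l x1 x1S jx1; rewrite l0.
by rewrite mem_filter => /andP[/eqP jx xS] ->; exists x.
Qed.

Lemma sum_by_proc_values (p : 'I_n -> R) (A : {set 'I_n}) :
  \sum_(i in A) p i = \sum_(q <- proc_values p) #|[set i in A | p i == q]|%:R * q.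
Proof.
have count_q q :
    #|[set i in A | p i == q]|%:R * q = \sum_(i in A) (if p i == q then q else 0).
  by rewrite mulr_natl -sumr_const -big_mkcondr /=; apply: eq_bigl => i; rewrite inE.
under [RHS]eq_bigr => q _ do rewrite count_q.
rewrite exchange_big /=; apply: eq_bigr => i _.
rewrite -big_mkcond /= -big_filter.
have -> : [seq q <- proc_values p | p i == q] = [:: p i].
  have pi_val : p i \in proc_values p by rewrite mem_undup map_f ?mem_enum.
  rewrite -(filter_pred1_uniq (undup_uniq _) pi_val).
  by apply: eq_filter => q /=; rewrite eq_sym.
by rewrite big_seq1.
Qed.

Definition block_time (r p : 'I_n -> R) (s : nat) (t : R) : Prop :=
  exists j0 (A : {set 'I_n}), t = r j0 + \sum_(i in A) p i /\ (#|A| <= s)%N.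

Lemma block_time_inT (r p : 'I_n -> R) (s : nat) (t : R) :
  block_time r p s t -> inT r p s t.
Proof.
move=> [j0 [A [-> HA]]]; exists j0, (fun q => #|[set i in A | p i == q]|).
split; last by rewrite sum_by_proc_values.
move=> q _; apply: leq_trans HA; apply: subset_leq_card; apply/subsetP => i.
by rewrite inE => /andP[].
Qed.

End Times.

Section Decomposition.
Variables (R : realFieldType) (n : nat) (r p : 'I_n -> R).
Variables (L : seq 'I_n) (S : seq (piece R n)).
Hypothesis p_gt0 : forall j, 0 < p j.
Hypothesis HS : list_schedule r p L S.
Implicit Types (x y : piece R n).

Lemma priority_prefix (Q : pred 'I_n) :
  (forall i j, j \in L -> i \in L -> (index i L <= index j L)%N -> Q j -> Q i) ->
  let SQ := [seq x <- S | Q (pc_job x)] in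
  [/\ forall x, x \in SQ -> r (pc_job x) <= pc_start x /\ pc_start x < pc_end x,
      greedy r SQ, pairwise disj SQ
    & forall x, x \in SQ -> \sum_(y <- SQ | pc_job y == pc_job x) len y = p (pc_job x)].
Proof.
case: HS => [pieceS disjS sumS prioS] Qclosed SQ.
have memSQ x : (x \in SQ) = (x \in S) && Q (pc_job x) by rewrite mem_filter andbC.
split.
- by move=> x; rewrite memSQ => /andP[/pieceS[]].
- move=> x; rewrite memSQ => /andP[xS Qx] u u1 u2.
  have /hasP[y yS /andP[Hi cy]] := prioS x xS u u1 u2.
  apply/hasP; exists y; rewrite // memSQ yS /=.
  have [jx _ _] := pieceS x xS; have [jy _ _] := pieceS y yS.
  exact: Qclosed jx jy Hi Qx.
- exact: pairwise_filter.
- move=> x; rewrite memSQ => /andP[xS Qx]; have [jx _ _] := pieceS x xS.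
  rewrite big_filter_cond -(sumS _ jx); apply: eq_bigl => y.
  by case: eqP => [->|]; rewrite ?Qx ?andbF.
Qed.

Lemma list_schedule_piece k : k \in L -> exists2 x, x \in S & pc_job x = k.
Proof. by case: HS => _ _ sumS _ kL; exact: job_has_piece (sumS k kL) (p_gt0 k). Qed.

Lemma compl_time_decomp k : k \in L ->
  exists rho (A : {set 'I_n}),
    [/\ compl_time S k = rho + \sum_(j in A) p j, (exists j0, rho = r j0), k \in A
      & forall j, j \in A -> [/\ j \in L, (index j L <= index k L)%N & rho <= r j]].
Proof.
move=> kL; have [[kl klS [jkl Ekl]] Hk] := compl_timeP (list_schedule_piece kL).
set C := compl_time S k in Ekl Hk *.
case: (HS) => pieceS disjS _ prioS.
pose Q j := (index j L <= index k L)%N.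
have [released greedyQ disjQ sumQ] :=
  priority_prefix (Q := Q) (fun i j _ _ ij jk => leq_trans ij jk).
set Sk := [seq x <- S | Q (pc_job x)] in released greedyQ disjQ sumQ.
have memSk x : (x \in Sk) = (x \in S) && Q (pc_job x) by rewrite mem_filter andbC.
have klSk : kl \in Sk by rewrite memSk klS /Q jkl leqnn.
have [kl1 kl2] := released kl klSk.
have klC : pc_start kl < C by rewrite -Ekl.
have klcov : covered Sk (pc_start kl) C.
  by move=> u u1 u2; apply/hasP; exists kl; rewrite // /covers u1 Ekl u2.
have [rho [rho_le [j0 _ Ej0] cov_rho cut_rho rho_min]] :=
  busy_period_start released greedyQ klSk klC klcov.
(* a job x processed before C and after C would preempt the last piece kl of k,
   so it would have higher priority than k, hence equal k *)
have cut_C : job_cut Sk C.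
  move=> x y; rewrite !memSk => /andP[xS Qx] /andP[yS _] Ej Hx Hy.
  set u := Num.max (pc_start kl) (pc_start x).
  have [_ a1 _] := pieceS x xS.
  have ry_u : r (pc_job y) <= u by rewrite -Ej (le_trans a1) // le_max lexx orbT.
  have u_C : u < C by rewrite gt_max klC Hx.
  have /hasP[z zS /andP[Hi cz]] := prioS y yS u ry_u (lt_trans u_C Hy).
  have ckl : covers u kl by rewrite /covers le_max lexx Ekl u_C.
  rewrite (covers_unique disjS zS klS cz ckl) jkl -Ej in Hi.
  have [jxL _ _] := pieceS x xS.
  have Ekx : k = pc_job x.
    by apply: (@index_inj _ k L) => //; apply: anti_leq; rewrite Hi; exact: Qx.
  by have := Hk y yS (ltac:(by rewrite -Ej -Ekx)); lra.
have Hblk := busy_block_length disjQ (fun x xS => (released x xS).2)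
  (le_trans rho_le (ltW klC)) cut_rho cut_C cov_rho sumQ.
exists rho, (block_jobs Sk rho C); split.
- by rewrite -Hblk; lra.
- by exists (pc_job j0).
- rewrite inE; apply/hasP; exists kl; rewrite // jkl eqxx -Ekl kl2.
  exact: le_lt_trans rho_le kl2.
- move=> j; rewrite inE => /hasP[x xSk /and3P[/eqP <- _ x2]].
  move: (xSk); rewrite memSk => /andP[xS Qx].
  by have [jL _ _] := pieceS x xS; split => //; exact: rho_min.
Qed.

Lemma start_time_decomp k : k \in L ->
  exists j0 (A : {set 'I_n}),
    start_time S k = r j0 + \sum_(j in A) p j /\ forall j, j \in A -> j \in L.
Proof.
move=> kL; have [[x0 x0S [jx0 Ex0]] Hk] := start_timeP (list_schedule_piece kL).
set v := start_time S k in Ex0 Hk *.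
case: (HS) => pieceS disjS _ prioS.
have [_ rx0 x0_pos] := pieceS x0 x0S; rewrite jx0 Ex0 in rx0 x0_pos.
have [Erv|Nrv] := eqVneq (r k) v.
  by exists k, set0; split=> [|j]; rewrite ?big_set0 ?addr0 ?in_set0.
have rkv : r k < v by rewrite lt_neqAle Nrv rx0.
pose Q j := (index j L < index k L)%N.
have [released greedyQ disjQ sumQ] :=
  priority_prefix (Q := Q) (fun i j _ _ ij jk => leq_ltn_trans ij jk).
set Sk := [seq x <- S | Q (pc_job x)] in released greedyQ disjQ sumQ.
have memSk x : (x \in Sk) = (x \in S) && Q (pc_job x) by rewrite mem_filter andbC.
(* k waits during [r k, S_k), so higher-priority jobs keep the machine busy *)
have cov : covered Sk (r k) v.
  move=> u u1 u2.
  have /hasP[z zS /andP[Hi cz]] :=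
    prioS x0 x0S u (ltac:(by rewrite jx0)) (lt_trans u2 x0_pos).
  apply/hasP; exists z; rewrite // memSk zS /Q ltn_neqAle -jx0 Hi andbT.
  apply/negP => /eqP same; have [jzL _ _] := pieceS z zS.
  have jz : pc_job z = k by apply: (@index_inj _ k L); rewrite // same jx0.
  by move: cz => /andP[c1 c2]; have := Hk z zS jz; lra.
have /hasP[y0 y0S /andP[cy1 cy2]] := cov (r k) (lexx _) rkv.
have y0v : pc_start y0 < v by exact: le_lt_trans cy1 rkv.
have y0c : covered Sk (pc_start y0) v.
  move=> u u1 u2; case: (ltrP u (pc_end y0)) => H.
    by apply/hasP; exists y0; rewrite // /covers u1 H.
  by apply: cov => //; exact: ltW (lt_le_trans cy2 H).
have [rho [rho_le [j0 _ Ej0] cov_rho cut_rho _]] :=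
  busy_period_start released greedyQ y0S y0v y0c.
(* a job of higher priority than k still unfinished at S_k would preempt k *)
have cut_v : job_cut Sk v.
  move=> x y; rewrite !memSk => /andP[xS Qx] /andP[yS _] Ej Hx Hy.
  have [_ a1 _] := pieceS x xS.
  have ry_v : r (pc_job y) <= v by rewrite -Ej (le_trans a1 (ltW Hx)).
  have /hasP[z zS /andP[Hi cz]] := prioS y yS v ry_v Hy.
  have cx0 : covers v x0 by rewrite /covers Ex0 lexx x0_pos.
  rewrite (covers_unique disjS zS x0S cz cx0) jx0 -Ej in Hi.
  by move: Qx; rewrite /Q ltnNge Hi.
have Hblk := busy_block_length disjQ (fun x xS => (released x xS).2)
  (le_trans rho_le (ltW y0v)) cut_rho cut_v cov_rho sumQ.
exists (pc_job j0), (block_jobs Sk rho v); split.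
  by rewrite -Ej0 -Hblk; lra.
move=> j; rewrite inE => /hasP[x xSk /and3P[/eqP <- _ _]].
by move: xSk; rewrite memSk => /andP[/pieceS[]].
Qed.

End Decomposition.

Section Dominance.
Variables (R : realFieldType) (n s : nat) (r p : 'I_n -> R).
Hypothesis p_gt0 : forall j, 0 < p j.
Variables (Jb : {set 'I_n}) (sg : seq (piece R n)).
Hypothesis feas : feasible r p s Jb sg.

(* Jobs processed in the busy period ending at C_k are processed in sg inside
   [rho, C_k(sg)], so C_k <= C_k(sg). *)
Lemma list_schedule_compl_le L S :
  list_schedule r p L S -> L =i Jb ->
  {in L &, forall i j, (index i L <= index j L)%N -> compl_time sg i <= compl_time sg j} ->
  forall k, k \in L -> compl_time S k <= compl_time sg k.
Proof.
case: feas => _ pieceF disjF sumF BS memL sortedL k kL.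
have [rho [A [-> _ kA HA]]] := compl_time_decomp p_gt0 BS kL.
have sg_piece j : j \in L -> exists2 x, x \in sg & pc_job x = j.
  by move=> jL; apply: job_has_piece (sumF j _) (p_gt0 j); rewrite -memL.
have [_ ends_before] := compl_timeP (sg_piece k kL).
have [x1 x1S jx1] := sg_piece k kL.
have [_ rx1 x1_pos] := pieceF x1 x1S; rewrite jx1 in rx1.
have [_ _ rho_rk] := HA k kA.
have -> : \sum_(j in A) p j = \sum_(x <- [seq x <- sg | pc_job x \in A]) len x.
  rewrite big_filter -sum_by_job; apply: eq_bigr => j jA.
  by have [jL _ _] := HA j jA; rewrite -sumF -?memL.
suff : \sum_(x <- [seq x <- sg | pc_job x \in A]) len x <= compl_time sg k - rho by lra.
apply: sum_len_within; first by have := ends_before x1 x1S jx1; lra.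
  exact: pairwise_filter.
move=> x; rewrite mem_filter => /andP[xA xS].
have [_ rx x_pos] := pieceF x xS; have [jL jk rho_rj] := HA _ xA.
split => //; first exact: le_trans rho_rj rx.
have [_ /(_ x xS erefl) x_end] := compl_timeP (ex_intro2 _ _ x xS erefl).
exact: le_trans x_end (sortedL _ _ jL kL jk).
Qed.

Lemma feasible_dominated : exists S,
  [/\ feasible r p s Jb S,
      forall j, j \in Jb -> compl_time S j <= compl_time sg j
    & forall j, j \in Jb ->
        block_time r p s (start_time S j) /\ block_time r p s (compl_time S j)].
Proof.
case: (feas) => cardJ pieceF disjF sumF.
pose leC i j := compl_time sg i <= compl_time sg j.
pose L := sort leC (enum Jb).
have memL : L =i Jb by move=> j; rewrite mem_sort mem_enum.
have sortedL : {in L &, forall i j, (index i L <= index j L)%N -> leC i j}.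
  move=> i j iL jL ij; rewrite -(nth_index i iL) -(nth_index i jL).
  have leC_trans : transitive leC by move=> a b c; apply: le_trans.
  apply: (sorted_leq_nth leC_trans (fun a => lexx _)); rewrite ?inE ?index_mem //.
  by apply: sort_sorted => a b; apply: le_total.
have [S BS] : exists S, list_schedule r p L S.
  by apply: list_schedule_exists; rewrite // sort_uniq enum_uniq.
have small (A : {set 'I_n}) : {subset A <= L} -> (#|A| <= s)%N.
  move=> AL; apply: leq_trans cardJ; apply: subset_leq_card; apply/subsetP => j /AL.
  by rewrite memL.
case: (BS) => pieceS disjS sumS _.
exists S; split.
- split => //; first by move=> x /pieceS[]; rewrite memL.
  by move=> j; rewrite -memL => /sumS.
- by move=> k; rewrite -memL; apply: list_schedule_compl_le.
- move=> k; rewrite -memL => kL; split.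
    have [j0 [A [E HA]]] := start_time_decomp p_gt0 BS kL.
    by exists j0, A; split => //; apply: small.
  have [rho [A [E [j0 Ej0] _ HA]]] := compl_time_decomp p_gt0 BS kL.
  by exists j0, A; rewrite E Ej0; split => //; apply: small => j /HA[].
Qed.

End Dominance.

Lemma block_values_finite (R : realFieldType) (n s : nat) (r p : 'I_n -> R)
    (f : 'I_n -> R -> R) :
  exists l : seq R, forall (Jb : {set 'I_n}) (S : seq (piece R n)),
    (forall j, j \in Jb -> block_time r p s (compl_time S j)) -> value f Jb S \in l.
Proof.
pose TT := [seq r j + \sum_(i in A) p i
  | j : 'I_n <- enum 'I_n, A : {set 'I_n} <- enum {set 'I_n}].
pose val (c : {set 'I_n} * {ffun 'I_n -> 'I_(size TT).+1}) :=
  \sum_(j in c.1) f j (nth 0 TT (c.2 j)).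
exists (codom val) => Jb S blk.
have inTT j : j \in Jb -> compl_time S j \in TT.
  by case/blk => j0 [A [-> _]]; apply: allpairs_f; rewrite mem_enum.
have -> : value f Jb S = val (Jb, [ffun j => inord (index (compl_time S j) TT)]).
  apply: eq_bigr => j jJ; rewrite ffunE inordK ?nth_index ?inTT //.
  by rewrite ltnS ltnW // index_mem inTT.
exact: codom_f.
Qed.

Unset Implicit Arguments. Set Strict Implicit.

Theorem mainTheorem11 (R : realFieldType) (n s : nat) (r p : 'I_n -> R)
    (f : 'I_n -> R -> R) :
  (forall j, 0 <= r j) ->
  (forall j, 0 < p j) ->
  (forall j (x y : R), x <= y -> f j y <= f j x) ->
  exists (Jb : {set 'I_n}) (sg : seq (piece R n)),
    [/\ feasible r p s Jb sg,
        (forall (Jb' : {set 'I_n}) (sg' : seq (piece R n)),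
            feasible r p s Jb' sg' -> value f Jb' sg' <= value f Jb sg)
      & (forall j, j \in Jb ->
            inT r p s (start_time sg j) /\ inT r p s (compl_time sg j))].
Proof.
move=> _ p_gt0 f_mono.
pose good (c : {set 'I_n} * seq (piece R n)) := feasible r p s c.1 c.2 /\
  forall j, j \in c.1 ->
    block_time r p s (start_time c.2 j) /\ block_time r p s (compl_time c.2 j).
have empty_good : good (set0, [::]).
  by split=> [|j]; rewrite ?in_set0 //; split=> // [|j]; rewrite ?cards0 ?in_set0.
have [l in_l] := block_values_finite s r p f.
have [[Jb S] [[feas blk] best]] := finite_values_max (val := fun c => value f c.1 c.2)
  (ex_intro _ _ empty_good) (fun c gc => in_l c.1 c.2 (fun j jJ => (gc.2 j jJ).2)).
exists Jb, S; split => //.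
- move=> Jb' sg' /(feasible_dominated p_gt0) [S' [feas' le_C blk']].
  apply: le_trans (best (Jb', S') (conj feas' blk')).
  by apply: ler_sum => j jJ; apply: f_mono; exact: le_C.
- by move=> j /blk[st ct]; split; apply: block_time_inT.
Qed.
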